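(* Let $T>0$, $N\ge1$, and $p\in L^2([0,T])$. Then $$\sum_{n=0}^{N-1}(2n+1)\Big(\int_0^T p(t)\tilde L_n(t)\,dt\Big)^2\;\le\;N^3\sum_{j=1}^N r_j\Big(\int_0^T p(t)\psi_j^{(1)}(t)\,dt\Big)^2,\qquad r_j:=N^{-3}\sum_{k=j}^N k(2k-1).$$
   Context: $L_n$ is the $n$-th Legendre polynomial on $[-1,1]$ (normalized by $L_n(1)=1$) and $\tilde L_n(t):=L_n(\tfrac{2t}{T}-1)$ for $t\in[0,T]$. Define $\psi_1^{(1)}:=\tilde L_0\equiv1$ and $\psi_n^{(1)}:=\tilde L_{n-1}-\tilde L_{n-2}$ for $n\ge2$. *)

From HB Require Import structures.
From mathcomp Require Import all_boot all_order all_algebra.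
From mathcomp Require Import all_classical all_reals all_analysis.
Set Implicit Arguments. Unset Strict Implicit. Unset Printing Implicit Defensive.
Import Order.TTheory GRing.Theory Num.Theory.
Local Open Scope ring_scope.
Local Open Scope classical_set_scope.

Section Legendre.
Variable R : realType.

(* leg_pair n x = (L_n x, L_{n+1} x), via Bonnet's recurrence
   (n+2) L_{n+2} = (2n+3) x L_{n+1} - (n+1) L_n,  L_0 = 1, L_1 = x. *)
Fixpoint leg_pair (n : nat) (x : R) : R * R :=
  match n with
  | 0 => (1, x)
  | n'.+1 => let: (a, b) := leg_pair n' x in
             (b, ((2 * n' + 3)%:R * x * b - (n'.+1)%:R * a) / (n'.+2)%:R)
  end.

Definition legendre (n : nat) (x : R) : R := (leg_pair n x).1.

Definition shifted_legendre (T : R) (n : nat) (t : R) : R :=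
  legendre n (2 * t / T - 1).

(* psi_n^(1): psi_1 = 1, psi_n = Ltilde_{n-1} - Ltilde_{n-2} for n >= 2
   (value at n = 0 is irrelevant; only n >= 1 is used). *)
Definition psi1 (T : R) (n : nat) (t : R) : R :=
  if (n <= 1)%N then 1
  else shifted_legendre T n.-1 t - shifted_legendre T n.-2 t.

Definition L2_on (T : R) (p : R -> R) : Prop :=
  measurable_fun `[0%R, T] p /\
  (\int[lebesgue_measure]_(t in `[0%R, T]) ((p t) ^+ 2)%:E < +oo)%E.

End Legendre.

(** The inner products of [p] with the [psi1 T j] telescope:
    [a_n := <p, Ltilde_n> = b_1 + ... + b_(n+1)] with [b_j := <p, psi_j>].
    Cauchy-Schwarz gives [(2n+1) a_n^2 <= (n+1)(2n+1) (b_1^2 + ... + b_(n+1)^2)],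
    and summing over [n < N] the coefficient collected by [b_j^2] is
    [sum_(j <= k <= N) k(2k-1) = N^3 r_j]. *)

From HB Require Import structures.
From mathcomp Require Import all_boot all_order all_algebra.
From mathcomp Require Import all_classical all_reals all_analysis.
From mathcomp Require Import ring lra zify measurable_realfun.
Set Implicit Arguments. Unset Strict Implicit. Unset Printing Implicit Defensive.
Import Order.TTheory GRing.Theory Num.Theory numFieldNormedType.Exports.
Local Open Scope ring_scope.
Local Open Scope classical_set_scope.

Lemma leg_pairS (R : realType) n (x : R) : leg_pair n.+1 x =
  ((leg_pair n x).2,
   ((2 * n + 3)%:R * x * (leg_pair n x).2 - (n.+1)%:R * (leg_pair n x).1) / (n.+2)%:R).
Proof. by rewrite /=; case: leg_pair. Qed.

Lemma leg_pair_continuous (R : realType) n :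
  continuous (fun x : R => (leg_pair n x).1) /\
  continuous (fun x : R => (leg_pair n x).2).
Proof.
elim: n => [|n [cont1 cont2]].
  by split=> x; [exact: cst_continuous | exact: cvg_id].
split; first by under eq_fun do rewrite leg_pairS.
under eq_fun do rewrite leg_pairS /=.
move=> x; have cst (c : R) : {for x, continuous (fun _ : R => c)} := @cst_continuous _ _ c _.
exact: (continuousM (continuousB
  (continuousM (continuousM (cst _) cvg_id) (cont2 x))
  (continuousM (cst _) (cont1 x))) (cst _)).
Qed.

Lemma shifted_legendre_continuous (R : realType) (T : R) n :
  continuous (shifted_legendre T n).
Proof.
move=> t; have cst (c : R) : {for t, continuous (fun _ : R => c)} := @cst_continuous _ _ c _.
exact: (continuous_comp
  (continuousB (continuousM (continuousM (cst _) cvg_id) (cst _)) (cst _))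
  (proj1 (leg_pair_continuous R n) _)).
Qed.

Lemma L2_on_mul_bounded_integrable (R : realType) (T M : R) (p f : R -> R) :
  L2_on T p -> measurable_fun `[0, T] f -> {in `[0, T]%R, forall t, f t ^+ 2 <= M} ->
  lebesgue_measure.-integrable `[0, T] (EFin \o (fun t => p t * f t)).
Proof.
move=> [mp p2_fin] mf f2_le.
have mD : measurable (`[0, T] : set R) by exact: measurable_itv.
eapply (@le_integrable _ _ R lebesgue_measure _ mD _ (EFin \o (fun t => p t ^+ 2 + M))).
- by apply/measurable_EFinP; exact: measurable_funM.
- move=> t Dt /=; rewrite lee_fin (le_trans _ (ler_norm _)) // ler_norml.
  by have := f2_le t Dt => f2_le_M; apply/andP; split; nra.
have -> : EFin \o (fun t => p t ^+ 2 + M) =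
    (EFin \o (fun t => p t ^+ 2)) \+ (EFin \o cst M) by apply/funext.
apply: integrableD => //.
- apply/integrableP; split; first by apply/measurable_EFinP; exact: measurable_funX.
  by under eq_integral => t _ do rewrite abse_EFin ger0_norm ?sqr_ge0//.
- apply: continuous_compact_integrable; first exact: segment_compact.
  exact: continuous_subspaceT (@cst_continuous R R M).
Qed.

Lemma L2_on_mul_continuous_integrable (R : realType) (T : R) (p f : R -> R) :
  0 < T -> L2_on T p -> continuous f ->
  lebesgue_measure.-integrable `[0, T] (EFin \o (fun t => p t * f t)).
Proof.
move=> T_gt0 pL2 cf.
have cf2 : continuous (fun t => f t ^+ 2) := fun t => continuousM (cf t) (cf t).
have [c _ f2_le] := EVT_max (ltW T_gt0) (continuous_subspaceT cf2).
apply: (L2_on_mul_bounded_integrable pL2 _ f2_le).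
exact: measurable_funTS (continuous_measurable_fun cf).
Qed.

Lemma sqr_sum_le_nat (R : realDomainType) (b : nat -> R) (m n : nat) :
  (\sum_(m <= i < n) b i) ^+ 2 <= (n - m)%:R * \sum_(m <= i < n) b i ^+ 2.
Proof.
set Q := \sum_(m <= i < n) b i ^+ 2.
have double_sum : \sum_(m <= i < n) \sum_(m <= j < n) (b i ^+ 2 + b j ^+ 2)
    = 2 * ((n - m)%:R * Q).
  rewrite (eq_bigr (fun i => (n - m)%:R * b i ^+ 2 + Q)); last first.
    by move=> i _; rewrite big_split /= sumr_const_nat mulr_natl.
  by rewrite big_split /= sumr_const_nat -mulr_sumr -/Q -[Q *+ _]mulr_natl; ring.
have : 2 * (\sum_(m <= i < n) b i) ^+ 2 <= 2 * ((n - m)%:R * Q).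
  rewrite -double_sum expr2 mulr_suml mulr_sumr; apply: ler_sum => i _.
  rewrite mulr_sumr mulr_sumr; apply: ler_sum => j _.
  by have := sqr_ge0 (b i - b j); nra.
by rewrite ler_pM2l.
Qed.

Lemma weighted_sqr_partial_sums_le (R : realDomainType) (b : nat -> R) (N : nat) :
  \sum_(0 <= n < N) (2 * n + 1)%:R * (\sum_(1 <= j < n.+2) b j) ^+ 2
  <= \sum_(1 <= j < N.+1) (\sum_(j <= k < N.+1) (k * (2 * k - 1))%:R) * b j ^+ 2.
Proof.
elim: N => [|N IH]; first by rewrite !big_geq.
(* Passing from N to N.+1 adds (N+1)(2N+1) to every weight, which is exactly
   what Cauchy-Schwarz charges for the new square of N+1 terms. *)
have weights_recr : \sum_(1 <= j < N.+2) (\sum_(j <= k < N.+2) (k * (2 * k - 1))%:R) * b j ^+ 2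
   = \sum_(1 <= j < N.+1) (\sum_(j <= k < N.+1) (k * (2 * k - 1))%:R) * b j ^+ 2
     + (N.+1)%:R * ((2 * N + 1)%:R * \sum_(1 <= j < N.+2) b j ^+ 2).
  rewrite mulrA -natrM [LHS]big_nat_recr //= big_nat1 big_distrr /=.
  rewrite [X in _ = _ + X]big_nat_recr //= addrA -big_split /=.
  have -> : (N.+1 * (2 * N + 1) = N.+1 * (2 * N.+1 - 1))%N by lia.
  congr (_ + _); apply: eq_big_nat => j /andP[_ jN].
  by rewrite big_nat_recr 1?ltnW //= mulrDl.
rewrite weights_recr big_nat_recr //=; apply: lerD => //.
have := sqr_sum_le_nat b 1 N.+2; rewrite subn1 /= => cs.
by rewrite [X in _ <= X]mulrCA ler_wpM2l.
Qed.

Lemma shifted_legendre_coef_sum_psi1 (R : realType) (T : R) (p : R -> R) n :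
  0 < T -> L2_on T p ->
  Rintegral lebesgue_measure `[0, T] (fun t => p t * shifted_legendre T n t) =
  \sum_(1 <= j < n.+2) Rintegral lebesgue_measure `[0, T] (fun t => p t * psi1 T j t).
Proof.
move=> T_gt0 pL2; elim: n => [|n IH].
  by rewrite big_nat1; congr Rintegral; apply/funext.
have coef_psi1 : Rintegral lebesgue_measure `[0, T] (fun t => p t * psi1 T n.+2 t) =
    Rintegral lebesgue_measure `[0, T] (fun t => p t * shifted_legendre T n.+1 t) -
    Rintegral lebesgue_measure `[0, T] (fun t => p t * shifted_legendre T n t).
  rewrite -RintegralB //; first by congr Rintegral; apply/funext => t; rewrite mulrBr.
  - apply: (L2_on_mul_continuous_integrable (f := shifted_legendre T n.+1)) => //.
    exact: shifted_legendre_continuous.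
  - apply: (L2_on_mul_continuous_integrable (f := shifted_legendre T n)) => //.
    exact: shifted_legendre_continuous.
by rewrite big_nat_recr //= -IH coef_psi1 addrC subrK.
Qed.

Theorem mainTheorem2 (R : realType) (T : R) (N : nat) (p : R -> R) :
  0 < T -> (1 <= N)%N -> L2_on T p ->
  \sum_(0 <= n < N)
      (2 * n + 1)%:R *
      (Rintegral lebesgue_measure `[0, T]
         (fun t => p t * shifted_legendre T n t)) ^+ 2
  <= (N ^ 3)%:R *
     \sum_(1 <= j < N.+1)
       ((N ^ 3)%:R^-1 * (\sum_(j <= k < N.+1) (k * (2 * k - 1))%:R)) *
       (Rintegral lebesgue_measure `[0, T]
          (fun t => p t * psi1 T j t)) ^+ 2.
Proof.
move=> T_gt0 N_gt0 pL2.
have N3_neq0 : (N ^ 3)%:R != 0 :> R by rewrite pnatr_eq0 -lt0n expn_gt0 N_gt0.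
rewrite mulr_sumr; under [X in _ <= X]eq_bigr do rewrite mulrA mulVKf //.
apply: le_trans (weighted_sqr_partial_sums_le _ N); rewrite le_eqVlt; apply/orP; left.
by apply/eqP/eq_bigr => n _; rewrite -shifted_legendre_coef_sum_psi1.
Qed.
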